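(* Let $f\in D[t;\sigma,\delta]$ be monic of degree $m\ge2$ and let $B$ be a subring of $D$. (i) $f$ is $B$-weak semi-invariant if and only if $B\subseteq\mathrm{Nuc}_r(S_f)$. (ii) If $f$ is $B$-weak semi-invariant but not right invariant, then $B\subseteq \mathrm{Nuc}(S_f)\subseteq D$.
   Context: $D$ is an associative division ring, $\sigma$ a ring endomorphism of $D$, $\delta$ a left $\sigma$-derivation ($\delta(ab)=\sigma(a)\delta(b)+\delta(a)b$, additive). $R=D[t;\sigma,\delta]$ is the skew polynomial ring with $ta=\sigma(a)t+\delta(a)$. For monic $f$ of degree $m$, $S_f$ is the set of polynomials of degree $<m$ with multiplication $g\circ h=$ remainder of $gh$ upon right division by $f$ ($gh=qf+r$, $\deg r<m$). Associator $[x,y,z]=(xy)z-x(yz)$; $\mathrm{Nuc}_r(A)=\{x:[A,A,x]=0\}$; $\mathrm{Nuc}(A)=\{x:[x,A,A]=[A,x,A]=[A,A,x]=0\}$. $f$ is $B$-weak semi-invariant if $fB\subseteq Df$. $f$ is right invariant if $fR\subseteq Rf$ (i.e. $Rf$ is a two-sided ideal of $R$). *)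

From HB Require Import structures.
From mathcomp Require Import all_boot all_order all_algebra.
Set Implicit Arguments. Unset Strict Implicit. Unset Printing Implicit Defensive.
Import GRing.Theory.
Local Open Scope ring_scope.

(* An element sum_i a_i t^i
   (coefficients on the LEFT) is represented by the MathComp polynomial
   with coefficient sequence (a_i); addition is the usual one, and the
   multiplication is the skew one [smul] defined below, determined by
   t a = sigma(a) t + delta(a). *)
Section SkewPoly.
Variable D : nzRingType.
Variable sigma : {rmorphism D -> D}.
Variable delta : D -> D.

(* left multiplication by t:  t * (sum_j b_j t^j)
   = sum_j (sigma(b_j) t^(j+1) + delta(b_j) t^j) *)
Definition skew_mulX (p : {poly D}) : {poly D} :=
  map_poly (sigma : D -> D) p * 'X + map_poly delta p.

Definition smul (p q : {poly D}) : {poly D} :=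
  \sum_(i < size p) (p`_i)%:P * iter (nat_of_ord i) skew_mulX q.

(* Remainder of right division by a monic f:  g = q f + r, deg r < deg f.
   One step removes the leading term of g by subtracting (c t^k) f. *)
Fixpoint srem_rec (f : {poly D}) (n : nat) (g : {poly D}) : {poly D} :=
  match n with
  | 0 => g
  | n'.+1 =>
      if (size g < size f)%N then g
      else srem_rec f n'
             (g - smul (lead_coef g *: 'X^(size g - size f)) f)
  end.

Definition srem (f g : {poly D}) : {poly D} := srem_rec f (size g) g.

Definition in_Sf (f g : {poly D}) : Prop := (size g < size f)%N.

Definition Sf_mul (f g h : {poly D}) : {poly D} := srem f (smul g h).

Definition Sf_assoc (f x y z : {poly D}) : {poly D} :=
  Sf_mul f (Sf_mul f x y) z - Sf_mul f x (Sf_mul f y z).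

Definition in_Nucr (f x : {poly D}) : Prop :=
  in_Sf f x /\
  forall y z, in_Sf f y -> in_Sf f z -> Sf_assoc f y z x = 0.

Definition in_Nuc (f x : {poly D}) : Prop :=
  in_Sf f x /\
  forall y z, in_Sf f y -> in_Sf f z ->
    [/\ Sf_assoc f x y z = 0, Sf_assoc f y x z = 0 & Sf_assoc f y z x = 0].

Definition weak_semi_invariant (f : {poly D}) (B : {pred D}) : Prop :=
  forall b, b \in B -> exists d : D, smul f b%:P = smul d%:P f.

Definition right_invariant (f : {poly D}) : Prop :=
  forall g : {poly D}, exists h : {poly D}, smul f g = smul h f.

End SkewPoly.

(* Everything rests on one identity in S_f: if x y = q f + r with deg r < m,
   then [x, y, z] = -((q (f z)) mod f), because right remainders are
   compatible with left multiplication (y (g mod f) and y g have the same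
   remainder).  For x = t and y = t^(m-1) we get x y = f + (t^m - f), hence
   [t, t^(m-1), b] = -((f b) mod f): so b lies in Nuc_r(S_f) iff f b lies in
   R f, and comparing degrees, f b = d f with d in D.  Constants b also have
   vanishing left and middle associators, as b y and y b still have degree
   < m.  Finally, if x in Nuc(S_f) has degree >= 1 and leading coefficient c,
   then x t^(m - deg x) = c f + r, so 0 = [x, t^(m - deg x), z] =
   -c ((f z) mod f) for every z in S_f, and f R lies in R f. *)

From Pilot Require Import Defs.
From HB Require Import structures.
From mathcomp Require Import all_boot all_order all_algebra.
From mathcomp Require Import zify.
Import GRing.Theory.
Local Open Scope ring_scope.

Lemma gt_size_coef (R : nzSemiRingType) (p : {poly R}) i :
  p`_i != 0 -> (i < size p)%N.
Proof. by move=> nz; rewrite ltnNge; apply: contra nz => le_pi; apply/eqP/nth_default. Qed.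

Lemma size_sub_eq_coef (R : nzRingType) (p q : {poly R}) n :
  (size p <= n.+1)%N -> (size q <= n.+1)%N -> p`_n = q`_n -> (size (p - q)%R <= n)%N.
Proof.
move=> /leq_sizeP p0 /leq_sizeP q0 pq_n; apply/leq_sizeP => j.
rewrite leq_eqVlt coefB => /predU1P[<- | n_lt_j]; first by rewrite pq_n subrr.
by rewrite p0 ?q0 ?subr0.
Qed.

Section SkewPolynomials.

Context {D : nzRingType} {sigma : {rmorphism D -> D}} {delta : {additive D -> D}}.
Hypothesis deltaM : forall a b, delta (a * b) = sigma a * delta b + delta a * b.
Implicit Types (b c : D) (p q r g h x y z : {poly D}).

Local Notation T := (skew_mulX sigma delta).
Local Notation smul := (smul sigma delta).

Lemma delta1 : delta 1 = 0.
Proof.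
apply: (addIr (delta 1)); rewrite add0r -[in RHS](mulr1 1) deltaM.
by rewrite rmorph1 mul1r mulr1.
Qed.

Lemma coef_skew_mulX p i :
  (T p)`_i = (if i == 0%N then 0 else sigma p`_i.-1) + delta p`_i.
Proof. by rewrite coefD coefMX !coef_map_id0 ?rmorph0 ?raddf0. Qed.

Lemma skew_mulXB : zmod_morphism T.
Proof.
move=> p q; rewrite /skew_mulX (raddfB (map_poly delta)) (raddfB (map_poly sigma)).
by rewrite mulrBl addrACA opprD.
Qed.

HB.instance Definition _ := GRing.isZmodMorphism.Build _ _ T skew_mulXB.

Lemma skew_mulXZ c p : T (c *: p) = sigma c *: T p + delta c *: p.
Proof.
apply/polyP => i; rewrite coef_skew_mulX coefD !coefZ coef_skew_mulX deltaM mulrDr.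
by case: eqP => _; rewrite ?mulr0 ?add0r ?rmorphM ?addrA.
Qed.

Lemma skew_mulX_Xn n : T ('X^n : {poly D}) = 'X^(n.+1).
Proof.
rewrite /skew_mulX map_polyXn -exprSr -[RHS]addr0; congr (_ + _).
apply/polyP => i; rewrite coef_map_id0 ?raddf0 // coefXn coef0.
by case: eqP; rewrite ?delta1 ?raddf0.
Qed.

Lemma size_skew_mulX p : (size (T p) <= (size p).+1)%N.
Proof.
apply/leq_sizeP => [[|j]] //= lt_pj.
by rewrite coef_skew_mulX !nth_default ?rmorph0 ?raddf0 ?addr0 // ltnW.
Qed.

Lemma iter_skew_mulXB n p q : iter n T (p - q) = iter n T p - iter n T q.
Proof. by elim: n => //= n ->; rewrite raddfB. Qed.

Lemma size_iter_skew_mulX n p : (size (iter n T p) <= size p + n)%N.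
Proof.
elim: n => [|n IHn] /=; first by rewrite addn0.
by apply: leq_trans (size_skew_mulX _) _; rewrite addnS ltnS.
Qed.

Lemma skew_mulX_monic q : q \is monic -> size (T q) = (size q).+1 /\ T q \is monic.
Proof.
move=> mq; have q_gt0 : (0 < size q)%N by rewrite size_poly_gt0 monic_neq0.
have top : (T q)`_(size q) = 1.
  rewrite coef_skew_mulX -(prednK q_gt0) /= (prednK q_gt0) -lead_coefE (eqP mq).
  by rewrite rmorph1 nth_default ?raddf0 ?addr0.
have sz : size (T q) = (size q).+1.
  by apply/eqP; rewrite eqn_leq size_skew_mulX gt_size_coef // top oner_neq0.
by rewrite monicE lead_coefE sz top.
Qed.

Lemma iter_skew_mulX_monic n q : q \is monic ->
  size (iter n T q) = (size q + n)%N /\ iter n T q \is monic.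
Proof.
move=> mq; elim: n => [|n [sz mT]] /=; first by rewrite addn0.
by have [-> ->] := skew_mulX_monic _ mT; rewrite sz addnS.
Qed.

Lemma smul_widen n p q : (size p <= n)%N ->
  smul p q = \sum_(i < n) p`_i *: iter i T q.
Proof.
move=> le_pn; rewrite /Defs.smul.
rewrite (big_ord_widen n (fun i => (p`_i)%:P * iter i T q) le_pn) big_mkcond.
apply: eq_bigr => i _; rewrite mul_polyC.
by case: ltnP => // /(nth_default 0) ->; rewrite scale0r.
Qed.

Lemma smulE p q : smul p q = \sum_(i < size p) p`_i *: iter i T q.
Proof. exact: smul_widen. Qed.

Lemma smulB_r p : zmod_morphism (smul p).
Proof.
move=> q r; rewrite !smulE -sumrB; apply: eq_bigr => i _.
by rewrite iter_skew_mulXB scalerBr.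
Qed.

HB.instance Definition _ p := GRing.isZmodMorphism.Build _ _ (smul p) (smulB_r p).

Lemma smulD_l p q r : smul (p + q) r = smul p r + smul q r.
Proof.
set n := maxn (size p) (size q).
rewrite !(@smul_widen n) ?leq_maxl ?leq_maxr ?(leq_trans (size_polyD _ _)) //.
by rewrite -big_split; apply: eq_bigr => i _; rewrite coefD scalerDl.
Qed.

Lemma smulZ_l c p r : smul (c *: p) r = c *: smul p r.
Proof.
rewrite (smul_widen _ _ _ (size_scale_leq c p)) smulE scaler_sumr.
by apply: eq_bigr => i _; rewrite coefZ scalerA.
Qed.

Lemma smul0_l r : smul 0 r = 0.
Proof. by rewrite smulE size_poly0 big_ord0. Qed.

Lemma smulB_l p q r : smul (p - q) r = smul p r - smul q r.
Proof. by rewrite smulD_l -scaleN1r smulZ_l scaleN1r. Qed.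

Lemma smulXn n q : smul 'X^n q = iter n T q.
Proof.
rewrite smulE size_polyXn big_ord_recr /= coefXn eqxx scale1r big1 ?add0r // => i _.
by rewrite coefXn ltn_eqF // scale0r.
Qed.

Lemma smulC c q : smul c%:P q = c *: q.
Proof. by rewrite (smul_widen _ _ _ (size_polyC_leq1 c)) big_ord1 coefC. Qed.

Lemma skew_mulX_smul g r : smul (T g) r = T (smul g r).
Proof.
rewrite (smul_widen _ _ _ (size_skew_mulX g)) smulE raddf_sum /=.
under [RHS]eq_bigr => i _ do rewrite skew_mulXZ.
under eq_bigr => i _ do rewrite coef_skew_mulX scalerDl.
rewrite !big_split /= big_ord_recl big_ord_recr /=.
by rewrite [g`_(size g)]nth_default // raddf0 !scale0r add0r addr0.
Qed.

Lemma smulA p q r : smul (smul p q) r = smul p (smul q r).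
Proof.
have smul_iter n g : smul (iter n T g) r = iter n T (smul g r).
  by elim: n => //= n IHn; rewrite skew_mulX_smul IHn.
rewrite [smul p q]smulE [RHS]smulE.
rewrite (big_morph (smul^~ r) (fun p q => smulD_l p q r) (smul0_l r)).
by apply: eq_bigr => i _; rewrite smulZ_l smul_iter.
Qed.

Lemma size_smul p q : (size (smul p q) <= (size p + size q).-1)%N.
Proof.
have [->|q_neq0] := eqVneq q 0; first by rewrite raddf0 size_poly0.
have q_gt0 : (0 < size q)%N by rewrite size_poly_gt0.
rewrite smulE; apply: leq_trans (size_sum _ _ _) _; apply/bigmax_leqP => i _.
apply: leq_trans (size_scale_leq _ _) (leq_trans (size_iter_skew_mulX _ _) _).
by have := ltn_ord i; lia.
Qed.

Lemma smul_monic p q : q \is monic -> p != 0 ->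
  size (smul p q) = (size p + size q).-1 /\ lead_coef (smul p q) = lead_coef p.
Proof.
move=> mq p_neq0; have q_gt0 : (0 < size q)%N by rewrite size_poly_gt0 monic_neq0.
have [n sp] : exists n, size p = n.+1 by exists (size p).-1; rewrite prednK ?size_poly_gt0.
have [sT mT] := iter_skew_mulX_monic n _ mq.
have low : (size (\sum_(i < n) p`_i *: iter i T q)%R <= (size q + n).-1)%N.
  apply: leq_trans (size_sum _ _ _) _; apply/bigmax_leqP => i _.
  apply: leq_trans (size_scale_leq _ _) (leq_trans (size_iter_skew_mulX _ _) _).
  by have := ltn_ord i; lia.
have top : (smul p q)`_(size q + n).-1 = lead_coef p.
  rewrite smulE sp big_ord_recr coefD (nth_default _ low) add0r coefZ -sT.
  by rewrite -lead_coefE (eqP mT) mulr1 lead_coefE sp.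
have sz : size (smul p q) = (size q + n)%N.
  apply/eqP; rewrite eqn_leq; apply/andP; split.
    by apply: leq_trans (size_smul _ _) _; rewrite sp addSn addnC.
  have := @gt_size_coef _ (smul p q) (size q + n).-1.
  by rewrite top lead_coef_eq0 => /(_ p_neq0); lia.
split; first by rewrite sz sp addSn addnC.
by rewrite lead_coefE sz top.
Qed.

Section Remainder.

Context {f : {poly D}}.
Hypothesis monic_f : f \is monic.

Local Notation srem := (srem sigma delta f).

Let f_gt0 : (0 < size f)%N.
Proof. by rewrite size_poly_gt0 monic_neq0. Qed.

Lemma size_srem_step g : (size f <= size g)%N ->
  (size (g - smul (lead_coef g *: 'X^(size g - size f)) f)%R < size g)%N.
Proof.
move=> le_fg; have g_gt0 := leq_trans f_gt0 le_fg.
set k := (size g - size f)%N; have [sT mT] := iter_skew_mulX_monic k _ monic_f.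
rewrite subnKC // in sT.
have top : (iter k T f)`_(size g).-1 = 1 by rewrite -sT -lead_coefE (eqP mT).
rewrite smulZ_l smulXn -(prednK g_gt0) ltnS; apply: size_sub_eq_coef.
- by rewrite prednK.
- by rewrite (leq_trans (size_scale_leq _ _)) // sT prednK.
by rewrite coefZ top mulr1 lead_coefE.
Qed.

Lemma srem_rec_spec n g : (size g <= n)%N ->
  (size (srem_rec sigma delta f n g) < size f)%N /\
  exists q, g = smul q f + srem_rec sigma delta f n g.
Proof.
elim: n g => [|n IHn] g le_gn /=.
  move: le_gn; rewrite leqn0 size_poly_eq0 => /eqP ->.
  by split; [rewrite size_poly0 | exists 0; rewrite smul0_l add0r].
case: (ltnP (size g) (size f)) => [lt_gf | le_fg].
  by split=> //; exists 0; rewrite smul0_l add0r.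
set t := lead_coef g *: 'X^(size g - size f).
have le_n : (size (g - smul t f)%R <= n)%N.
  by rewrite -ltnS (leq_trans (size_srem_step _ le_fg)).
have [lt_rf [q def_g]] := IHn _ le_n; split=> //; exists (q + t).
by rewrite smulD_l -addrA [X in _ + X]addrC addrA -def_g subrK.
Qed.

Lemma size_srem g : (size (srem g) < size f)%N.
Proof. by have [] := srem_rec_spec _ _ (leqnn (size g)). Qed.

Lemma srem_div g : exists q, g = smul q f + srem g.
Proof. by have [] := srem_rec_spec _ _ (leqnn (size g)). Qed.

Lemma srem_unique g q r : (size r < size f)%N -> g = smul q f + r -> srem g = r.
Proof.
move=> lt_rf ->; have lt_sf := size_srem (smul q f + r).
have [q' def_g] := srem_div (smul q f + r).
set s := srem _ in lt_sf def_g *.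
have E : smul (q - q') f = s - r.
  by rewrite smulB_l -[smul q f](addrK r) def_g addrAC [smul q' f + s]addrC addrK.
have [q_eq | q_neq] := eqVneq (q - q') 0.
  by apply/eqP; rewrite -subr_eq0 -E q_eq smul0_l.
have [sz _] := smul_monic _ _ monic_f q_neq.
have : (size (s - r)%R < size f)%N.
  by rewrite (leq_ltn_trans (size_polyD _ _)) // size_polyN gtn_max lt_sf lt_rf.
by rewrite -E sz; have := size_poly_gt0 (q - q'); rewrite q_neq; lia.
Qed.

Lemma srem_smull q : srem (smul q f) = 0.
Proof. by apply: (srem_unique _ q); rewrite ?size_poly0 ?addr0. Qed.

Lemma sremB : zmod_morphism srem.
Proof.
move=> g h; have [q def_g] := srem_div g; have [q' def_h] := srem_div h.
apply: (srem_unique _ (q - q')).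
  by rewrite (leq_ltn_trans (size_polyD _ _)) // size_polyN gtn_max !size_srem.
by rewrite smulB_l {1}def_g {1}def_h opprD addrACA.
Qed.

HB.instance Definition _ := GRing.isZmodMorphism.Build _ _ srem sremB.

Lemma sremZ c g : srem (c *: g) = c *: srem g.
Proof.
have [q def_g] := srem_div g; apply: (srem_unique _ (c *: q)).
  exact: leq_ltn_trans (size_scale_leq _ _) (size_srem g).
by rewrite smulZ_l {1}def_g scalerDr.
Qed.

Lemma srem_eq0 g : srem g = 0 <-> exists q, g = smul q f.
Proof.
split=> [g0 | [q ->]]; last exact: srem_smull.
by have [q def_g] := srem_div g; exists q; rewrite {1}def_g g0 addr0.
Qed.

Lemma srem_smul_srem y g : srem (smul y (srem g)) = srem (smul y g).
Proof.
have [q def_g] := srem_div g.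
by rewrite {2}def_g (raddfD (smul y)) /= -smulA raddfD /= srem_smull add0r.
Qed.

Lemma Sf_assocE x y z q r : (size r < size f)%N -> smul x y = smul q f + r ->
  Sf_assoc sigma delta f x y z = - srem (smul q (smul f z)).
Proof.
move=> lt_rf xy_div; rewrite /Sf_assoc /Sf_mul (srem_unique _ _ _ lt_rf xy_div).
rewrite srem_smul_srem -smulA.
have -> : smul r z = smul (smul x y) z - smul q (smul f z).
  by rewrite xy_div smulD_l smulA addrAC subrr add0r.
by rewrite raddfB addrAC subrr add0r.
Qed.

Lemma Sf_assoc_small x y z : (size (smul x y) < size f)%N ->
  Sf_assoc sigma delta f x y z = 0.
Proof.
move=> lt_xyf; rewrite (Sf_assocE _ _ z 0 _ lt_xyf); last by rewrite smul0_l add0r.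
by rewrite smul0_l raddf0 oppr0.
Qed.

Lemma right_invariant_srem :
  (forall z, (size z < size f)%N -> srem (smul f z) = 0) ->
  right_invariant sigma delta f.
Proof.
move=> Sf_inv g; have [q def_g] := srem_div g.
have [h fr] := (srem_eq0 _).1 (Sf_inv _ (size_srem g)).
by exists (smul f q + h); rewrite {1}def_g raddfD /= -smulA fr smulD_l.
Qed.

Lemma semi_invariant_polyCP b :
  (exists d, smul f b%:P = smul d%:P f) <-> srem (smul f b%:P) = 0.
Proof.
split=> [[d ->] | /srem_eq0 [q fb]]; first exact: srem_smull.
exists q`_0; rewrite fb -size1_polyC //.
have [-> | q_neq0] := eqVneq q 0; first by rewrite size_poly0.
have [sz _] := smul_monic _ _ monic_f q_neq0.
have := size_smul f b%:P; rewrite fb sz.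
by have := size_polyC_leq1 b; have := f_gt0; lia.
Qed.

Lemma in_Sf_polyC b : (1 < size f)%N -> in_Sf f b%:P.
Proof. exact: leq_ltn_trans (size_polyC_leq1 b). Qed.

Lemma Nucr_polyCP b : (2 < size f)%N ->
  in_Nucr sigma delta f b%:P <-> srem (smul f b%:P) = 0.
Proof.
move=> f_gt2; split=> [[_ Nb] | fb0].
  have [k sf] : exists k, size f = k.+3 by exists (size f - 3)%N; lia.
  have SX : in_Sf f 'X by rewrite /in_Sf size_polyX sf.
  have SXk : in_Sf f 'X^(k.+1) by rewrite /in_Sf size_polyXn sf.
  have := Nb _ _ SX SXk.
  rewrite (Sf_assocE _ _ _ 1%:P ('X^(k.+2) - f)).
  - by rewrite smulC scale1r => /eqP; rewrite oppr_eq0 => /eqP.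
  - rewrite sf ltnS; apply: size_sub_eq_coef; rewrite ?size_polyXn ?sf //.
    by rewrite coefXn eqxx -(eqP monic_f) lead_coefE sf.
  by rewrite -{1}['X]expr1 smulXn /= skew_mulX_Xn smulC scale1r addrC subrK.
split; first exact/in_Sf_polyC/ltnW.
move=> y z _ _; have [q yz] := srem_div (smul y z).
have [h fb] := (srem_eq0 _).1 fb0.
by rewrite (Sf_assocE _ _ _ _ _ (size_srem _) yz) fb -smulA srem_smull oppr0.
Qed.

Lemma Nuc_polyC b : in_Nucr sigma delta f b%:P -> in_Nuc sigma delta f b%:P.
Proof.
move=> [Sb Nb]; split=> // y z Sy Sz; split; last exact: Nb.
  by apply: Sf_assoc_small; rewrite smulC (leq_ltn_trans (size_scale_leq _ _)).
apply: Sf_assoc_small; apply: leq_ltn_trans (size_smul _ _) _.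
by have := size_polyC_leq1 b; move: Sy; rewrite /in_Sf; lia.
Qed.

Lemma right_invariant_of_Nuc x : in_Nuc sigma delta f x -> (1 < size x)%N ->
  GRing.lreg (lead_coef x) -> right_invariant sigma delta f.
Proof.
move=> [Sx Nx] x_gt1 reg_x; apply: right_invariant_srem => z Sz.
set c := lead_coef x; set y : {poly D} := 'X^(size f - size x).
have Sy : in_Sf f y by rewrite /in_Sf size_polyXn; move: Sx; rewrite /in_Sf; lia.
have x_neq0 : x != 0 by rewrite -size_poly_gt0 ltnW.
have [sxy lxy] := smul_monic x y (monicXn _ _) x_neq0.
have {}sxy : size (smul x y) = size f.
  by rewrite sxy size_polyXn; move: Sx; rewrite /in_Sf; lia.
have [left_assoc _ _] := Nx y z Sy Sz; move: left_assoc.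
rewrite (Sf_assocE _ _ _ c%:P (smul x y - c *: f)).
- by rewrite smulC sremZ => /eqP; rewrite oppr_eq0 lreg_polyZ_eq0 // => /eqP.
- rewrite -(prednK f_gt0) ltnS; apply: size_sub_eq_coef.
  + by rewrite sxy prednK.
  + exact: leq_trans (size_scale_leq _ _) (leqSpred _).
  by rewrite coefZ -lead_coefE (eqP monic_f) mulr1 -sxy -lead_coefE lxy.
by rewrite smulC addrC subrK.
Qed.

End Remainder.

End SkewPolynomials.

Theorem mainTheorem3
  (D : unitRingType)
  (HD : forall x : D, x != 0 -> x \is a GRing.unit)
  (sigma : {rmorphism D -> D})
  (delta : D -> D)
  (Hdadd : forall a b : D, delta (a + b) = delta a + delta b)
  (Hdmul : forall a b : D, delta (a * b) = sigma a * delta b + delta a * b)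
  (f : {poly D}) (Hmonic : f \is monic) (Hdeg : (2 < size f)%N)
  (B : {pred D}) (HB : subring_closed B) :
  (weak_semi_invariant sigma delta f B <->
     (forall b, b \in B -> in_Nucr sigma delta f b%:P))
  /\
  (weak_semi_invariant sigma delta f B ->
   ~ right_invariant sigma delta f ->
     (forall b, b \in B -> in_Nuc sigma delta f b%:P) /\
     (forall x, in_Nuc sigma delta f x -> (size x <= 1)%N)).
Proof.
have delta0 : delta 0 = 0 by apply: (addrI (delta 0)); rewrite -Hdadd !addr0.
pose da : {additive D -> D} :=
  HB.pack delta (GRing.isNmodMorphism.Build D D delta (delta0, Hdadd)).
change delta with (da : D -> D) in Hdmul |- *.
have NucrP b := Nucr_polyCP Hdmul Hmonic b Hdeg.
split=> [|semi_f not_ri].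
  split=> [semi_f b /semi_f | Nucr_f b /Nucr_f].
    by move/(semi_invariant_polyCP Hmonic)/NucrP.
  by move/NucrP/(semi_invariant_polyCP Hmonic).
split=> [b /semi_f | x Nx].
  by move/(semi_invariant_polyCP Hmonic)/NucrP/(Nuc_polyC Hdmul Hmonic).
rewrite leqNgt; apply/negP => x_gt1.
apply: not_ri; apply: (right_invariant_of_Nuc Hdmul Hmonic x Nx x_gt1).
by apply/mulrI/HD; rewrite lead_coef_eq0 -size_poly_gt0 ltnW.
Qed.
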